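(* Let $\mathfrak C$ be a finitely complete category and let $\Phi\colon\mathcal H\to\mathcal K$ be an effective descent morphism in $\mathbf{Cat}(\mathfrak C)$ such that $\Phi_1$ is an effective descent morphism in $\mathfrak C$. Then discrete opfibrations descend along $\Phi$: if $p\colon\mathcal X\to\mathcal K$ is an internal functor whose pullback $p'\colon\mathcal X'\to\mathcal H$ along $\Phi$ is a discrete opfibration, then $p$ is a discrete opfibration.
   Context: $\mathbf{Cat}(\mathfrak C)$ is the category of internal categories and internal functors in $\mathfrak C$. An internal functor $p\colon\mathcal X\to\mathcal K$ is a discrete opfibration if the square formed by $s\colon X_1\to X_0$, $p_1\colon X_1\to K_1$, $p_0\colon X_0\to K_0$ and $s\colon K_1\to K_0$ is a pullback. Effective descent morphisms are those along which pullback induces an equivalence between objects over the codomain and objects over the domain equipped with descent data for the kernel pair. *)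

From Stdlib Require Import ProofIrrelevance.

Record Category := {
  Ob :> Type;
  Hom : Ob -> Ob -> Type;
  idm : forall a, Hom a a;
  comp : forall a b c, Hom b c -> Hom a b -> Hom a c;
  comp_assoc : forall a b c d (h : Hom c d) (g : Hom b c) (f : Hom a b),
      comp _ _ _ h (comp _ _ _ g f) = comp _ _ _ (comp _ _ _ h g) f;
  comp_id_l : forall a b (f : Hom a b), comp _ _ _ (idm b) f = f;
  comp_id_r : forall a b (f : Hom a b), comp _ _ _ f (idm a) = f }.

Arguments Hom {_} _ _.
Arguments idm {_} _.
Arguments comp {_ _ _ _} _ _.
Arguments comp_assoc {_ _ _ _ _} _ _ _.
Arguments comp_id_l {_ _ _} _.
Arguments comp_id_r {_ _ _} _.

Notation "g ∘ f" := (comp g f) (at level 40, left associativity).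

Definition is_pullback {C : Category} {P A B Z : C}
  (pa : Hom P A) (pb : Hom P B) (f : Hom A Z) (g : Hom B Z) : Prop :=
  f ∘ pa = g ∘ pb /\
  forall (T : C) (x : Hom T A) (y : Hom T B), f ∘ x = g ∘ y ->
    exists! u : Hom T P, pa ∘ u = x /\ pb ∘ u = y.

Definition is_terminal {C : Category} (T : C) : Prop :=
  forall X : C, exists! f : Hom X T, True.

Definition finitely_complete (C : Category) : Prop :=
  (exists T : C, is_terminal T) /\
  forall (A B Z : C) (f : Hom A Z) (g : Hom B Z),
    exists (P : C) (pa : Hom P A) (pb : Hom P B), is_pullback pa pb f g.

Lemma comp_eq_r {C : Category} {a b b' c d : C}
  (f : Hom b c) (g : Hom a b) (h : Hom b' c) (k : Hom a b') :
  f ∘ g = h ∘ k -> forall (x : Hom d a), f ∘ (g ∘ x) = h ∘ (k ∘ x).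
Proof. intros E x. rewrite !comp_assoc, E. reflexivity. Qed.

(* ic1 = object of arrows, ic0 = object of objects,
   ic2 = object of composable pairs (f,g) with t f = s g (a pullback),
   ic_m (f,g) = "g after f". *)
Record InternalCat (C : Category) := {
  ic0 : C; ic1 : C; ic2 : C;
  ic_s : Hom ic1 ic0; ic_t : Hom ic1 ic0; ic_e : Hom ic0 ic1;
  ic_p1 : Hom ic2 ic1; ic_p2 : Hom ic2 ic1;
  ic_m : Hom ic2 ic1;
  ic_pb : is_pullback ic_p1 ic_p2 ic_t ic_s;
  ic_se : ic_s ∘ ic_e = idm ic0;
  ic_te : ic_t ∘ ic_e = idm ic0;
  ic_sm : ic_s ∘ ic_m = ic_s ∘ ic_p1;
  ic_tm : ic_t ∘ ic_m = ic_t ∘ ic_p2;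
  ic_unit_l : forall (T : C) (f : Hom T ic1) (u : Hom T ic2),
      ic_p1 ∘ u = ic_e ∘ (ic_s ∘ f) -> ic_p2 ∘ u = f -> ic_m ∘ u = f;
  ic_unit_r : forall (T : C) (f : Hom T ic1) (u : Hom T ic2),
      ic_p1 ∘ u = f -> ic_p2 ∘ u = ic_e ∘ (ic_t ∘ f) -> ic_m ∘ u = f;
  (* ((f,g),h) : u12 = (f,g), u23 = (g,h), u123 = (m(f,g),h), u1_23 = (f,m(g,h)) *)
  ic_assoc : forall (T : C) (u12 u23 u123 u1_23 : Hom T ic2),
      ic_p2 ∘ u12 = ic_p1 ∘ u23 ->
      ic_p1 ∘ u123 = ic_m ∘ u12 -> ic_p2 ∘ u123 = ic_p2 ∘ u23 ->
      ic_p1 ∘ u1_23 = ic_p1 ∘ u12 -> ic_p2 ∘ u1_23 = ic_m ∘ u23 ->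
      ic_m ∘ u123 = ic_m ∘ u1_23 }.

Arguments ic0 {C} _. Arguments ic1 {C} _. Arguments ic2 {C} _.
Arguments ic_s {C} _. Arguments ic_t {C} _. Arguments ic_e {C} _.
Arguments ic_p1 {C} _. Arguments ic_p2 {C} _. Arguments ic_m {C} _.
Arguments ic_pb {C} _.

Record IFunctor {C : Category} (X Y : InternalCat C) := {
  if0 : Hom (ic0 X) (ic0 Y);
  if1 : Hom (ic1 X) (ic1 Y);
  if_s : ic_s Y ∘ if1 = if0 ∘ ic_s X;
  if_t : ic_t Y ∘ if1 = if0 ∘ ic_t X;
  if_e : if1 ∘ ic_e X = ic_e Y ∘ if0;
  if_m : forall (T : C) (u : Hom T (ic2 X)) (v : Hom T (ic2 Y)),
      ic_p1 Y ∘ v = if1 ∘ (ic_p1 X ∘ u) ->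
      ic_p2 Y ∘ v = if1 ∘ (ic_p2 X ∘ u) ->
      if1 ∘ (ic_m X ∘ u) = ic_m Y ∘ v }.

Arguments if0 {C X Y} _. Arguments if1 {C X Y} _.
Arguments if_s {C X Y} _. Arguments if_t {C X Y} _.
Arguments if_e {C X Y} _. Arguments if_m {C X Y} _.

Lemma IFunctor_eq {C : Category} {X Y : InternalCat C} (F G : IFunctor X Y) :
  if0 F = if0 G -> if1 F = if1 G -> F = G.
Proof.
  destruct F as [F0 F1 a b c d], G as [G0 G1 a' b' c' d']; simpl.
  intros -> ->. f_equal; apply proof_irrelevance.
Qed.

Section CatC.
Variable C : Category.

Definition if_id (X : InternalCat C) : IFunctor X X.
Proof.
  refine {| if0 := idm (ic0 X); if1 := idm (ic1 X) |}.
  - rewrite comp_id_l, comp_id_r; reflexivity.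
  - rewrite comp_id_l, comp_id_r; reflexivity.
  - rewrite comp_id_l, comp_id_r; reflexivity.
  - intros T u v H1 H2. rewrite comp_id_l in *.
    assert (v = u) as ->; [|reflexivity].
    destruct (proj2 (ic_pb X) T (ic_p1 X ∘ u) (ic_p2 X ∘ u)) as [w [_ Hw]].
    { rewrite !comp_assoc. f_equal. exact (proj1 (ic_pb X)). }
    transitivity w; [symmetry|]; apply Hw; auto.
Defined.

Definition if_comp {X Y Z : InternalCat C} (G : IFunctor Y Z) (F : IFunctor X Y)
  : IFunctor X Z.
Proof.
  refine {| if0 := if0 G ∘ if0 F; if1 := if1 G ∘ if1 F |}.
  - rewrite comp_assoc, (if_s G), <- comp_assoc, (if_s F), comp_assoc.
    reflexivity.
  - rewrite comp_assoc, (if_t G), <- comp_assoc, (if_t F), comp_assoc.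
    reflexivity.
  - rewrite <- comp_assoc, (if_e F), comp_assoc, (if_e G), <- comp_assoc.
    reflexivity.
  - intros T u v H1 H2.
    destruct (proj2 (ic_pb Y) T (if1 F ∘ (ic_p1 X ∘ u)) (if1 F ∘ (ic_p2 X ∘ u)))
      as [w [[Hw1 Hw2] _]].
    { rewrite (comp_eq_r _ _ _ _ (if_t F)), (comp_eq_r _ _ _ _ (if_s F)).
      f_equal. rewrite !comp_assoc. f_equal. exact (proj1 (ic_pb X)). }
    rewrite <- comp_assoc, (if_m F T u w Hw1 Hw2).
    apply (if_m G).
    + rewrite H1, Hw1. symmetry; apply comp_assoc.
    + rewrite H2, Hw2. symmetry; apply comp_assoc.
Defined.

Definition CatC : Category.
Proof.
  refine {| Ob := InternalCat C; Hom := fun X Y => IFunctor X Y;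
            idm := if_id; comp := fun X Y Z G F => if_comp G F |}.
  - intros; apply IFunctor_eq; simpl; apply comp_assoc.
  - intros; apply IFunctor_eq; simpl; apply comp_id_l.
  - intros; apply IFunctor_eq; simpl; apply comp_id_r.
Defined.

End CatC.

(* A descent datum for p : E -> B (an algebra for the monad p^* Sigma_p):
   an object a : A -> E over E, a pullback P = E x_B A of p along p∘a
   (projections dd_p1 : P -> E, dd_p2 : P -> A) and an action
   xi : P -> A over E, satisfying unit and associativity. *)
Record DescentDatum {D : Category} {E B : D} (p : Hom E B) := {
  dd_ob : D;
  dd_map : Hom dd_ob E;
  dd_P : D;
  dd_p1 : Hom dd_P E;
  dd_p2 : Hom dd_P dd_ob;
  dd_pb : is_pullback dd_p1 dd_p2 p (p ∘ dd_map);
  dd_act : Hom dd_P dd_ob;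
  dd_act_over : dd_map ∘ dd_act = dd_p1;
  dd_unit : forall (T : D) (x : Hom T dd_ob) (u : Hom T dd_P),
      dd_p1 ∘ u = dd_map ∘ x -> dd_p2 ∘ u = x -> dd_act ∘ u = x;
  dd_assoc : forall (T : D) (u1 u2 u3 : Hom T dd_P),
      dd_p1 ∘ u2 = dd_p1 ∘ u3 ->
      dd_p2 ∘ u2 = dd_act ∘ u1 ->
      dd_p2 ∘ u3 = dd_p2 ∘ u1 ->
      dd_act ∘ u2 = dd_act ∘ u3 }.

Arguments dd_ob {D E B p} _. Arguments dd_map {D E B p} _.
Arguments dd_P {D E B p} _. Arguments dd_p1 {D E B p} _.
Arguments dd_p2 {D E B p} _. Arguments dd_act {D E B p} _.

Definition dd_morphism {D : Category} {E B : D} {p : Hom E B}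
  (d d' : DescentDatum p) (g : Hom (dd_ob d) (dd_ob d')) : Prop :=
  dd_map d' ∘ g = dd_map d /\
  forall (T : D) (u : Hom T (dd_P d)) (v : Hom T (dd_P d')),
    dd_p1 d' ∘ v = dd_p1 d ∘ u -> dd_p2 d' ∘ v = g ∘ (dd_p2 d ∘ u) ->
    g ∘ (dd_act d ∘ u) = dd_act d' ∘ v.

(* d is (a representative of) the image of q : X -> B under the comparison
   functor p^* : D/B -> Desc(p): dd_ob d is a pullback of q along p (with
   projection pi to X), and the action is the canonical one. *)
Definition is_comparison_of {D : Category} {E B X : D} {p : Hom E B}
  (q : Hom X B) (d : DescentDatum p) (pi : Hom (dd_ob d) X) : Prop :=
  is_pullback (dd_map d) pi p q /\ pi ∘ dd_act d = pi ∘ dd_p2 d.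

(* p is an effective descent morphism: the comparison functor
   p^* : D/B -> Desc(p) is an equivalence, i.e. fully faithful and
   essentially surjective. *)
Definition effective_descent {D : Category} {E B : D} (p : Hom E B) : Prop :=
  (forall (X Y : D) (q : Hom X B) (r : Hom Y B) (d d' : DescentDatum p)
          (piX : Hom (dd_ob d) X) (piY : Hom (dd_ob d') Y),
      is_comparison_of q d piX -> is_comparison_of r d' piY ->
      forall g : Hom (dd_ob d) (dd_ob d'), dd_morphism d d' g ->
      exists! h : Hom X Y, r ∘ h = q /\ piY ∘ g = h ∘ piX) /\
  (forall d : DescentDatum p,
      exists (X : D) (q : Hom X B) (d' : DescentDatum p) (pi : Hom (dd_ob d') X)
             (g : Hom (dd_ob d) (dd_ob d')) (g' : Hom (dd_ob d') (dd_ob d)),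
        is_comparison_of q d' pi /\ dd_morphism d d' g /\ dd_morphism d' d g' /\
        g' ∘ g = idm _ /\ g ∘ g' = idm _).

Definition discrete_opfibration {C : Category} {X K : InternalCat C}
  (p : IFunctor X K) : Prop :=
  is_pullback (ic_s X) (if1 p) (if0 p) (ic_s K).


(* Let c : X1 -> X0 ×_{K0} K1 be the comparison map of the square defining
   [discrete_opfibration p]. The levelwise pullback piH : P -> H of p along Phi
   maps into the given pullback X' -> H over H, and from this piH inherits
   being a discrete opfibration from p'. Pulled back along Phi1, c becomes, up
   to isomorphism, the comparison map of the square for piH, hence invertible.
   Pulling back along the effective descent morphism Phi1 is fully faithful,
   so it reflects isomorphisms and c is invertible. *)

Lemma eq_precomp {C : Category} {a b c d : C} (f : Hom b c) (g : Hom a b) (h : Hom a c) :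
  f ∘ g = h -> forall x : Hom d a, f ∘ (g ∘ x) = h ∘ x.
Proof. intros E x. rewrite comp_assoc, E. reflexivity. Qed.

Ltac assoc_r := repeat rewrite <- comp_assoc.

Tactic Notation "rewrite_comp" constr(E) :=
  assoc_r;
  first [ rewrite (comp_eq_r _ _ _ _ E) | rewrite (eq_precomp _ _ _ E) | rewrite E ];
  assoc_r.
Tactic Notation "rewrite_comp" "<-" constr(E) :=
  assoc_r;
  first [ rewrite <- (comp_eq_r _ _ _ _ E) | rewrite <- (eq_precomp _ _ _ E) | rewrite <- E ];
  assoc_r.

Definition has_pullbacks (C : Category) : Prop :=
  forall (A B Z : C) (f : Hom A Z) (g : Hom B Z),
    exists (P : C) (pa : Hom P A) (pb : Hom P B), is_pullback pa pb f g.

Definition jointly_monic {C : Category} {P A B : C} (pa : Hom P A) (pb : Hom P B) : Prop :=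
  forall (T : C) (u v : Hom T P), pa ∘ u = pa ∘ v -> pb ∘ u = pb ∘ v -> u = v.

Section Pullbacks.
Context {C : Category}.

Lemma pullback_lift {P A B Z : C} {pa : Hom P A} {pb : Hom P B} {f : Hom A Z} {g : Hom B Z}
  (Hp : is_pullback pa pb f g) {T : C} (x : Hom T A) (y : Hom T B) :
  f ∘ x = g ∘ y -> exists u, pa ∘ u = x /\ pb ∘ u = y.
Proof. intros E. destruct (proj2 Hp T x y E) as [u [Hu _]]. eauto. Qed.

Lemma pullback_jointly_monic {P A B Z : C} {pa : Hom P A} {pb : Hom P B}
  {f : Hom A Z} {g : Hom B Z} :
  is_pullback pa pb f g -> jointly_monic pa pb.
Proof.
  intros Hp T u v H1 H2.
  destruct (proj2 Hp T (pa ∘ v) (pb ∘ v)) as [w [_ Hw]].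
  { rewrite !comp_assoc, (proj1 Hp). reflexivity. }
  transitivity w; [symmetry|]; apply Hw; auto.
Qed.

Lemma is_pullback_intro {P A B Z : C} {pa : Hom P A} {pb : Hom P B}
  {f : Hom A Z} {g : Hom B Z} :
  f ∘ pa = g ∘ pb ->
  (forall (T : C) (x : Hom T A) (y : Hom T B), f ∘ x = g ∘ y ->
     exists u, pa ∘ u = x /\ pb ∘ u = y) ->
  jointly_monic pa pb -> is_pullback pa pb f g.
Proof.
  intros Hc Hex Hmono. split; [exact Hc|].
  intros T x y E. destruct (Hex T x y E) as [u [Hu1 Hu2]].
  exists u. split; [auto|]. intros v [Hv1 Hv2].
  apply Hmono; congruence.
Qed.

Lemma is_pullback_sym {P A B Z : C} {pa : Hom P A} {pb : Hom P B}
  {f : Hom A Z} {g : Hom B Z} :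
  is_pullback pa pb f g -> is_pullback pb pa g f.
Proof.
  intros Hp. apply is_pullback_intro.
  - symmetry. exact (proj1 Hp).
  - intros T x y E. destruct (pullback_lift Hp y x (eq_sym E)) as [u [Hu1 Hu2]]. eauto.
  - intros T u v H1 H2. exact (pullback_jointly_monic Hp T u v H2 H1).
Qed.

Lemma is_pullback_of_iso {P Q A B Z : C} {pa : Hom P A} {pb : Hom P B}
  {qa : Hom Q A} {qb : Hom Q B} {f : Hom A Z} {g : Hom B Z}
  (HQ : is_pullback qa qb f g) (c : Hom P Q) (h : Hom Q P) :
  qa ∘ c = pa -> qb ∘ c = pb -> h ∘ c = idm P -> c ∘ h = idm Q ->
  is_pullback pa pb f g.
Proof.
  intros <- <- Hhc Hch. apply is_pullback_intro.
  - rewrite_comp (proj1 HQ). reflexivity.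
  - intros T x y E. destruct (pullback_lift HQ x y E) as [k [Hk1 Hk2]].
    exists (h ∘ k). rewrite_comp Hch. rewrite !comp_id_l. auto.
  - intros T u v H1 H2.
    rewrite <- (comp_id_l u), <- (comp_id_l v), <- Hhc. assoc_r. f_equal.
    apply (pullback_jointly_monic HQ); rewrite !comp_assoc; assumption.
Qed.

Lemma pullback_map {P A B Z P' A' B' Z' : C} {pa : Hom P A} {pb : Hom P B}
  {f : Hom A Z} {g : Hom B Z} {pa' : Hom P' A'} {pb' : Hom P' B'}
  {f' : Hom A' Z'} {g' : Hom B' Z'} (Hp' : is_pullback pa' pb' f' g')
  (x : Hom A A') (y : Hom B B') (z : Hom Z Z') :
  z ∘ f = f' ∘ x -> z ∘ g = g' ∘ y -> f ∘ pa = g ∘ pb ->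
  exists m : Hom P P', pa' ∘ m = x ∘ pa /\ pb' ∘ m = y ∘ pb.
Proof.
  intros Hx Hy Hc. apply (pullback_lift Hp').
  rewrite_comp <- Hx. rewrite_comp <- Hy. rewrite_comp Hc. reflexivity.
Qed.

End Pullbacks.

Section Descent.
Context {D : Category} {E B : D} (p : Hom E B).

Lemma dd_morphism_id (d : DescentDatum p) : dd_morphism d d (idm _).
Proof.
  split; [apply comp_id_r|]. intros T u v H1 H2. rewrite comp_id_l in *.
  rewrite (pullback_jointly_monic (dd_pb _ d) T u v); auto.
Qed.

Lemma dd_morphism_inv (d d' : DescentDatum p) g g' :
  dd_morphism d d' g -> g' ∘ g = idm _ -> g ∘ g' = idm _ -> dd_morphism d' d g'.
Proof.
  intros [Hmap Hact] Hgg' Hg'g. split.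
  - rewrite <- Hmap. rewrite_comp Hg'g. apply comp_id_r.
  - intros T u v H1 H2.
    assert (Hv : dd_p2 d' ∘ u = g ∘ (dd_p2 d ∘ v)).
    { rewrite H2. rewrite_comp Hg'g. symmetry. apply comp_id_l. }
    rewrite <- (Hact T v u (eq_sym H1) Hv). rewrite_comp Hgg'. apply comp_id_l.
Qed.

Lemma effective_descent_faithful (Hp : effective_descent p) {Y Z : D}
  {q : Hom Y B} {r : Hom Z B} {dY dZ : DescentDatum p}
  {piY : Hom (dd_ob dY) Y} {piZ : Hom (dd_ob dZ) Z}
  (HY : is_comparison_of q dY piY) (HZ : is_comparison_of r dZ piZ)
  (g : Hom (dd_ob dY) (dd_ob dZ)) (h1 h2 : Hom Y Z) :
  dd_morphism dY dZ g ->
  r ∘ h1 = q -> piZ ∘ g = h1 ∘ piY -> r ∘ h2 = q -> piZ ∘ g = h2 ∘ piY -> h1 = h2.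
Proof.
  intros Hg H1 H1' H2 H2'.
  destruct (proj1 Hp Y Z q r dY dZ piY piZ HY HZ g Hg) as [h [_ Hh]].
  transitivity h; [symmetry|]; apply Hh; auto.
Qed.

Lemma effective_descent_reflects_iso (Hp : effective_descent p) {Y Z : D}
  {q : Hom Y B} {r : Hom Z B} {dY dZ : DescentDatum p}
  {piY : Hom (dd_ob dY) Y} {piZ : Hom (dd_ob dZ) Z}
  (HY : is_comparison_of q dY piY) (HZ : is_comparison_of r dZ piZ)
  (f : Hom Y Z) (f' : Hom (dd_ob dY) (dd_ob dZ)) (g' : Hom (dd_ob dZ) (dd_ob dY)) :
  r ∘ f = q -> piZ ∘ f' = f ∘ piY -> dd_morphism dY dZ f' ->
  f' ∘ g' = idm _ -> g' ∘ f' = idm _ ->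
  exists h : Hom Z Y, h ∘ f = idm Y /\ f ∘ h = idm Z.
Proof.
  intros Hf Hf' Hmf' Hfg Hgf.
  pose proof (dd_morphism_inv _ _ _ _ Hmf' Hgf Hfg) as Hmg'.
  destruct (proj1 Hp Z Y r q dZ dY piZ piY HZ HY g' Hmg') as [h [[Hh Hh'] _]].
  exists h. split.
  - apply (effective_descent_faithful Hp HY HY _ _ _ (dd_morphism_id dY)).
    + rewrite_comp Hh. exact Hf.
    + rewrite comp_id_r. rewrite_comp <- Hf'. rewrite_comp <- Hh'.
      rewrite_comp Hgf. now rewrite comp_id_r.
    + apply comp_id_r.
    + rewrite comp_id_l. apply comp_id_r.
  - apply (effective_descent_faithful Hp HZ HZ _ _ _ (dd_morphism_id dZ)).
    + rewrite_comp Hf. exact Hh.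
    + rewrite comp_id_r. rewrite_comp <- Hh'. rewrite_comp <- Hf'.
      rewrite_comp Hfg. now rewrite comp_id_r.
    + apply comp_id_r.
    + rewrite comp_id_l. apply comp_id_r.
Qed.

(* The descent datum [p^* q]: the pullback [Y'] of [q] along [p], acted on by
   the kernel pair of [p] through the second factor. *)
Definition pullback_datum {Y Y' : D} {q : Hom Y B} {a : Hom Y' E} {pi : Hom Y' Y}
  (Hpb : is_pullback a pi p q) {P : D} {r1 : Hom P E} {r2 : Hom P Y'}
  (HP : is_pullback r1 r2 p (p ∘ a)) {act : Hom P Y'}
  (Hact1 : a ∘ act = r1) (Hact2 : pi ∘ act = pi ∘ r2) : DescentDatum p.
Proof.
  refine {| dd_ob := Y'; dd_map := a; dd_P := P; dd_p1 := r1; dd_p2 := r2;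
            dd_pb := HP; dd_act := act; dd_act_over := Hact1 |}.
  - intros T x u H1 H2. apply (pullback_jointly_monic Hpb).
    + rewrite_comp Hact1. exact H1.
    + rewrite_comp Hact2. rewrite H2. reflexivity.
  - intros T u1 u2 u3 H1 H2 H3. apply (pullback_jointly_monic Hpb).
    + rewrite_comp Hact1. rewrite_comp Hact1. exact H1.
    + rewrite_comp Hact2. rewrite_comp Hact2. rewrite H2, H3. rewrite_comp Hact2.
      reflexivity.
Defined.

Lemma pullback_datum_action {Y Y' : D} {q : Hom Y B} {a : Hom Y' E} {pi : Hom Y' Y}
  (Hpb : is_pullback a pi p q) {P : D} {r1 : Hom P E} {r2 : Hom P Y'}
  (HP : is_pullback r1 r2 p (p ∘ a)) :
  exists act : Hom P Y', a ∘ act = r1 /\ pi ∘ act = pi ∘ r2.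
Proof.
  apply (pullback_lift Hpb). rewrite (proj1 HP). rewrite_comp (proj1 Hpb). reflexivity.
Qed.

Lemma pullback_datum_comparison {Y Y' : D} {q : Hom Y B} {a : Hom Y' E} {pi : Hom Y' Y}
  (Hpb : is_pullback a pi p q) {P : D} {r1 : Hom P E} {r2 : Hom P Y'}
  (HP : is_pullback r1 r2 p (p ∘ a)) {act : Hom P Y'} Hact1 Hact2 :
  is_comparison_of q (pullback_datum Hpb HP (act := act) Hact1 Hact2) pi.
Proof. split; assumption. Qed.

Lemma pullback_datum_morphism
  {Y Y' : D} {q : Hom Y B} {ay : Hom Y' E} {piy : Hom Y' Y} (Hy : is_pullback ay piy p q)
  {PY : D} {ry1 : Hom PY E} {ry2 : Hom PY Y'} (HPY : is_pullback ry1 ry2 p (p ∘ ay))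
  {acty : Hom PY Y'} (Hacty1 : ay ∘ acty = ry1) (Hacty2 : piy ∘ acty = piy ∘ ry2)
  {Z Z' : D} {r : Hom Z B} {az : Hom Z' E} {piz : Hom Z' Z} (Hz : is_pullback az piz p r)
  {PZ : D} {rz1 : Hom PZ E} {rz2 : Hom PZ Z'} (HPZ : is_pullback rz1 rz2 p (p ∘ az))
  {actz : Hom PZ Z'} (Hactz1 : az ∘ actz = rz1) (Hactz2 : piz ∘ actz = piz ∘ rz2)
  (f : Hom Y Z) (f' : Hom Y' Z') :
  az ∘ f' = ay -> piz ∘ f' = f ∘ piy ->
  dd_morphism (pullback_datum Hy HPY Hacty1 Hacty2) (pullback_datum Hz HPZ Hactz1 Hactz2) f'.
Proof.
  intros Hf1 Hf2. split; [exact Hf1|]. simpl. intros T u v H1 H2.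
  apply (pullback_jointly_monic Hz).
  - rewrite_comp Hf1. rewrite_comp Hactz1. rewrite_comp Hacty1. auto.
  - rewrite_comp Hf2. rewrite_comp Hacty2. rewrite_comp Hactz2. rewrite H2.
    rewrite_comp Hf2. reflexivity.
Qed.

Lemma pullback_reflects_iso (HD : has_pullbacks D) (Hp : effective_descent p)
  {Y Z : D} {q : Hom Y B} {r : Hom Z B} (f : Hom Y Z) (Hf : r ∘ f = q)
  {Y' Z' : D} {ay : Hom Y' E} {piy : Hom Y' Y} (Hy : is_pullback ay piy p q)
  {az : Hom Z' E} {piz : Hom Z' Z} (Hz : is_pullback az piz p r)
  (f' : Hom Y' Z') (g' : Hom Z' Y') :
  az ∘ f' = ay -> piz ∘ f' = f ∘ piy -> f' ∘ g' = idm _ -> g' ∘ f' = idm _ ->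
  exists h : Hom Z Y, h ∘ f = idm _ /\ f ∘ h = idm _.
Proof.
  intros Hf1 Hf2 Hfg Hgf.
  destruct (HD _ _ _ p (p ∘ ay)) as [PY [ry1 [ry2 HPY]]].
  destruct (pullback_datum_action Hy HPY) as [acty [Hacty1 Hacty2]].
  destruct (HD _ _ _ p (p ∘ az)) as [PZ [rz1 [rz2 HPZ]]].
  destruct (pullback_datum_action Hz HPZ) as [actz [Hactz1 Hactz2]].
  exact (effective_descent_reflects_iso Hp
           (pullback_datum_comparison Hy HPY Hacty1 Hacty2)
           (pullback_datum_comparison Hz HPZ Hactz1 Hactz2) f f' g' Hf Hf2
           (pullback_datum_morphism Hy HPY Hacty1 Hacty2 Hz HPZ Hactz1 Hactz2 f f' Hf1 Hf2)
           Hfg Hgf).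
Qed.

End Descent.

Record InternalCatData (C : Category) := {
  cd0 : C; cd1 : C; cd2 : C;
  cd_s : Hom cd1 cd0; cd_t : Hom cd1 cd0; cd_e : Hom cd0 cd1;
  cd_p1 : Hom cd2 cd1; cd_p2 : Hom cd2 cd1; cd_m : Hom cd2 cd1 }.

Arguments cd0 {C} _. Arguments cd1 {C} _. Arguments cd2 {C} _.
Arguments cd_s {C} _. Arguments cd_t {C} _. Arguments cd_e {C} _.
Arguments cd_p1 {C} _. Arguments cd_p2 {C} _. Arguments cd_m {C} _.

Definition cat_data {C : Category} (X : InternalCat C) : InternalCatData C :=
  {| cd0 := ic0 X; cd1 := ic1 X; cd2 := ic2 X;
     cd_s := ic_s X; cd_t := ic_t X; cd_e := ic_e X;
     cd_p1 := ic_p1 X; cd_p2 := ic_p2 X; cd_m := ic_m X |}.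

Record is_structure_map {C : Category} (G : InternalCatData C) (Y : InternalCat C)
  (f0 : Hom (cd0 G) (ic0 Y)) (f1 : Hom (cd1 G) (ic1 Y)) (f2 : Hom (cd2 G) (ic2 Y)) : Prop := {
  sm_s : ic_s Y ∘ f1 = f0 ∘ cd_s G;
  sm_t : ic_t Y ∘ f1 = f0 ∘ cd_t G;
  sm_e : f1 ∘ cd_e G = ic_e Y ∘ f0;
  sm_p1 : ic_p1 Y ∘ f2 = f1 ∘ cd_p1 G;
  sm_p2 : ic_p2 Y ∘ f2 = f1 ∘ cd_p2 G;
  sm_m : f1 ∘ cd_m G = ic_m Y ∘ f2 }.

Arguments sm_s {C G Y f0 f1 f2} _. Arguments sm_t {C G Y f0 f1 f2} _.
Arguments sm_e {C G Y f0 f1 f2} _. Arguments sm_p1 {C G Y f0 f1 f2} _.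
Arguments sm_p2 {C G Y f0 f1 f2} _. Arguments sm_m {C G Y f0 f1 f2} _.

Section StructureMap.
Context {C : Category} {G : InternalCatData C} {Y : InternalCat C}
  {f0 : Hom (cd0 G) (ic0 Y)} {f1 : Hom (cd1 G) (ic1 Y)} {f2 : Hom (cd2 G) (ic2 Y)}
  (Hf : is_structure_map G Y f0 f1 f2).

Ltac push_projections := rewrite !comp_assoc, ?(sm_p1 Hf), ?(sm_p2 Hf); assoc_r.

Lemma structure_map_se : f0 ∘ (cd_s G ∘ cd_e G) = f0 ∘ idm _.
Proof.
  rewrite_comp <- (sm_s Hf). rewrite_comp (sm_e Hf). rewrite_comp (ic_se _ Y).
  now rewrite comp_id_l, comp_id_r.
Qed.

Lemma structure_map_te : f0 ∘ (cd_t G ∘ cd_e G) = f0 ∘ idm _.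
Proof.
  rewrite_comp <- (sm_t Hf). rewrite_comp (sm_e Hf). rewrite_comp (ic_te _ Y).
  now rewrite comp_id_l, comp_id_r.
Qed.

Lemma structure_map_sm : f0 ∘ (cd_s G ∘ cd_m G) = f0 ∘ (cd_s G ∘ cd_p1 G).
Proof.
  rewrite_comp <- (sm_s Hf). rewrite_comp (sm_m Hf). rewrite_comp (ic_sm _ Y).
  rewrite_comp (sm_p1 Hf). now rewrite_comp (sm_s Hf).
Qed.

Lemma structure_map_tm : f0 ∘ (cd_t G ∘ cd_m G) = f0 ∘ (cd_t G ∘ cd_p2 G).
Proof.
  rewrite_comp <- (sm_t Hf). rewrite_comp (sm_m Hf). rewrite_comp (ic_tm _ Y).
  rewrite_comp (sm_p2 Hf). now rewrite_comp (sm_t Hf).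
Qed.

Lemma structure_map_unit_l (T : C) (x : Hom T (cd1 G)) (u : Hom T (cd2 G)) :
  cd_p1 G ∘ u = cd_e G ∘ (cd_s G ∘ x) -> cd_p2 G ∘ u = x ->
  f1 ∘ (cd_m G ∘ u) = f1 ∘ x.
Proof.
  intros H1 H2. rewrite_comp (sm_m Hf). apply (ic_unit_l _ Y).
  - push_projections. rewrite H1. rewrite_comp (sm_e Hf). now rewrite_comp (sm_s Hf).
  - push_projections. now rewrite H2.
Qed.

Lemma structure_map_unit_r (T : C) (x : Hom T (cd1 G)) (u : Hom T (cd2 G)) :
  cd_p1 G ∘ u = x -> cd_p2 G ∘ u = cd_e G ∘ (cd_t G ∘ x) ->
  f1 ∘ (cd_m G ∘ u) = f1 ∘ x.
Proof.
  intros H1 H2. rewrite_comp (sm_m Hf). apply (ic_unit_r _ Y).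
  - push_projections. now rewrite H1.
  - push_projections. rewrite H2. rewrite_comp (sm_e Hf). now rewrite_comp (sm_t Hf).
Qed.

Lemma structure_map_assoc (T : C) (u12 u23 u123 u1_23 : Hom T (cd2 G)) :
  cd_p2 G ∘ u12 = cd_p1 G ∘ u23 ->
  cd_p1 G ∘ u123 = cd_m G ∘ u12 -> cd_p2 G ∘ u123 = cd_p2 G ∘ u23 ->
  cd_p1 G ∘ u1_23 = cd_p1 G ∘ u12 -> cd_p2 G ∘ u1_23 = cd_m G ∘ u23 ->
  f1 ∘ (cd_m G ∘ u123) = f1 ∘ (cd_m G ∘ u1_23).
Proof.
  intros A1 A2 A3 A4 A5. rewrite_comp (sm_m Hf). rewrite_comp (sm_m Hf).
  apply (ic_assoc _ Y T (f2 ∘ u12) (f2 ∘ u23)); push_projections.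
  - now rewrite A1.
  - rewrite A2. now rewrite_comp (sm_m Hf).
  - now rewrite A3.
  - now rewrite A4.
  - rewrite A5. now rewrite_comp (sm_m Hf).
Qed.

Lemma structure_map_comp (T : C) (u : Hom T (cd2 G)) (v : Hom T (ic2 Y)) :
  ic_p1 Y ∘ v = f1 ∘ (cd_p1 G ∘ u) -> ic_p2 Y ∘ v = f1 ∘ (cd_p2 G ∘ u) ->
  f1 ∘ (cd_m G ∘ u) = ic_m Y ∘ v.
Proof.
  intros H1 H2. rewrite_comp (sm_m Hf). f_equal.
  apply (pullback_jointly_monic (ic_pb Y)); push_projections; auto.
Qed.

End StructureMap.

Section JointlyMonicStructureMaps.
Context {C : Category} (G : InternalCatData C)
  (HG : is_pullback (cd_p1 G) (cd_p2 G) (cd_t G) (cd_s G))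
  {Y Z : InternalCat C}
  {f0 : Hom (cd0 G) (ic0 Y)} {f1 : Hom (cd1 G) (ic1 Y)} {f2 : Hom (cd2 G) (ic2 Y)}
  {g0 : Hom (cd0 G) (ic0 Z)} {g1 : Hom (cd1 G) (ic1 Z)} {g2 : Hom (cd2 G) (ic2 Z)}
  (Hf : is_structure_map G Y f0 f1 f2) (Hg : is_structure_map G Z g0 g1 g2)
  (Hmono0 : jointly_monic f0 g0) (Hmono1 : jointly_monic f1 g1).

Definition internal_cat_of_structure_maps : InternalCat C :=
  {| ic0 := cd0 G; ic1 := cd1 G; ic2 := cd2 G;
     ic_s := cd_s G; ic_t := cd_t G; ic_e := cd_e G;
     ic_p1 := cd_p1 G; ic_p2 := cd_p2 G; ic_m := cd_m G;
     ic_pb := HG;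
     ic_se := Hmono0 _ _ _ (structure_map_se Hf) (structure_map_se Hg);
     ic_te := Hmono0 _ _ _ (structure_map_te Hf) (structure_map_te Hg);
     ic_sm := Hmono0 _ _ _ (structure_map_sm Hf) (structure_map_sm Hg);
     ic_tm := Hmono0 _ _ _ (structure_map_tm Hf) (structure_map_tm Hg);
     ic_unit_l := fun T x u H1 H2 => Hmono1 _ _ _
       (structure_map_unit_l Hf T x u H1 H2) (structure_map_unit_l Hg T x u H1 H2);
     ic_unit_r := fun T x u H1 H2 => Hmono1 _ _ _
       (structure_map_unit_r Hf T x u H1 H2) (structure_map_unit_r Hg T x u H1 H2);
     ic_assoc := fun T u12 u23 u123 u1_23 A1 A2 A3 A4 A5 => Hmono1 _ _ _
       (structure_map_assoc Hf T u12 u23 u123 u1_23 A1 A2 A3 A4 A5)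
       (structure_map_assoc Hg T u12 u23 u123 u1_23 A1 A2 A3 A4 A5) |}.

End JointlyMonicStructureMaps.

Definition functor_of_structure_map {C : Category} {P Y : InternalCat C}
  {f0 : Hom (ic0 P) (ic0 Y)} {f1 : Hom (ic1 P) (ic1 Y)} {f2 : Hom (ic2 P) (ic2 Y)}
  (Hf : is_structure_map (cat_data P) Y f0 f1 f2) : IFunctor P Y :=
  {| if0 := f0; if1 := f1; if_s := sm_s Hf; if_t := sm_t Hf; if_e := sm_e Hf;
     if_m := structure_map_comp Hf |}.

Definition is_levelwise_pullback {C : Category} {P X H K : InternalCat C}
  (piX : IFunctor P X) (piH : IFunctor P H) (p : IFunctor X K) (Phi : IFunctor H K) : Prop :=
  is_pullback (if0 piX) (if0 piH) (if0 p) (if0 Phi) /\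
  is_pullback (if1 piX) (if1 piH) (if1 p) (if1 Phi).

Lemma levelwise_pullback_commutes {C : Category} {P X H K : InternalCat C}
  {piX : IFunctor P X} {piH : IFunctor P H} {p : IFunctor X K} {Phi : IFunctor H K} :
  is_levelwise_pullback piX piH p Phi -> if_comp C p piX = if_comp C Phi piH.
Proof. intros [HP0 HP1]. apply IFunctor_eq; [exact (proj1 HP0) | exact (proj1 HP1)]. Qed.

Lemma levelwise_pullback_exists {C : Category} (HC : has_pullbacks C)
  {X H K : InternalCat C} (p : IFunctor X K) (Phi : IFunctor H K) :
  exists (P : InternalCat C) (piX : IFunctor P X) (piH : IFunctor P H),
    is_levelwise_pullback piX piH p Phi.
Proof.
  destruct (HC _ _ _ (if0 p) (if0 Phi)) as [P0 [a0 [b0 HP0]]].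
  destruct (HC _ _ _ (if1 p) (if1 Phi)) as [P1 [a1 [b1 HP1]]].
  destruct (pullback_map HP0 _ _ _ (if_s p) (if_s Phi) (proj1 HP1)) as [sP [Hs1 Hs2]].
  destruct (pullback_map HP0 _ _ _ (if_t p) (if_t Phi) (proj1 HP1)) as [tP [Ht1 Ht2]].
  destruct (pullback_map HP1 _ _ _ (eq_sym (if_e p)) (eq_sym (if_e Phi)) (proj1 HP0))
    as [eP [He1 He2]].
  destruct (HC _ _ _ tP sP) as [P2 [q1 [q2 HP2]]].
  destruct (pullback_lift (ic_pb X) (a1 ∘ q1) (a1 ∘ q2)) as [wX [HwX1 HwX2]].
  { rewrite_comp <- Ht1. rewrite_comp (proj1 HP2). now rewrite_comp Hs1. }
  destruct (pullback_lift (ic_pb H) (b1 ∘ q1) (b1 ∘ q2)) as [wH [HwH1 HwH2]].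
  { rewrite_comp <- Ht2. rewrite_comp (proj1 HP2). now rewrite_comp Hs2. }
  destruct (pullback_lift (ic_pb K) (if1 p ∘ (a1 ∘ q1)) (if1 p ∘ (a1 ∘ q2)))
    as [wK [HwK1 HwK2]].
  { rewrite_comp (if_t p). rewrite_comp (if_s p). rewrite_comp <- Ht1.
    rewrite_comp (proj1 HP2). now rewrite_comp Hs1. }
  destruct (pullback_lift HP1 (ic_m X ∘ wX) (ic_m H ∘ wH)) as [mP [Hm1 Hm2]].
  { rewrite (if_m p _ wX wK), (if_m Phi _ wH wK); [reflexivity| | |congruence|congruence];
      [rewrite HwK1, HwH1 | rewrite HwK2, HwH2]; now rewrite_comp (proj1 HP1). }
  pose (G := {| cd0 := P0; cd1 := P1; cd2 := P2; cd_s := sP; cd_t := tP; cd_e := eP;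
                cd_p1 := q1; cd_p2 := q2; cd_m := mP |}).
  assert (HX : is_structure_map G X a0 a1 wX) by (split; simpl; auto).
  assert (HH : is_structure_map G H b0 b1 wH) by (split; simpl; auto).
  pose (P := internal_cat_of_structure_maps G HP2 HX HH
              (pullback_jointly_monic HP0) (pullback_jointly_monic HP1)).
  exists P, (functor_of_structure_map (P := P) HX), (functor_of_structure_map (P := P) HH).
  split; assumption.
Qed.

Lemma levelwise_pullback_discrete_opfibration {C : Category}
  {P X H K X' : InternalCat C} {piX : IFunctor P X} {piH : IFunctor P H}
  {p : IFunctor X K} {Phi : IFunctor H K} {Phi' : IFunctor X' X} {p' : IFunctor X' H}
  (U : IFunctor P X') :
  is_levelwise_pullback piX piH p Phi -> if_comp C p Phi' = if_comp C Phi p' ->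
  if_comp C Phi' U = piX -> if_comp C p' U = piH ->
  discrete_opfibration p' -> discrete_opfibration piH.
Proof.
  intros [HP0 HP1] Hcomm HUX HUH Hdo.
  assert (Hcomm1 : if1 p ∘ if1 Phi' = if1 Phi ∘ if1 p') by exact (f_equal if1 Hcomm).
  assert (HUX0 : if0 Phi' ∘ if0 U = if0 piX) by exact (f_equal if0 HUX).
  assert (HUX1 : if1 Phi' ∘ if1 U = if1 piX) by exact (f_equal if1 HUX).
  assert (HUH0 : if0 p' ∘ if0 U = if0 piH) by exact (f_equal if0 HUH).
  assert (HUH1 : if1 p' ∘ if1 U = if1 piH) by exact (f_equal if1 HUH).
  apply is_pullback_intro.
  - symmetry. exact (if_s piH).
  - intros T x y E.
    destruct (pullback_lift Hdo (if0 U ∘ x) y) as [z [Hz1 Hz2]].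
    { rewrite_comp HUH0. exact E. }
    destruct (pullback_lift HP1 (if1 Phi' ∘ z) y) as [u [Hu1 Hu2]].
    { rewrite_comp Hcomm1. now rewrite Hz2. }
    exists u. split; [|exact Hu2].
    apply (pullback_jointly_monic HP0).
    + rewrite_comp <- (if_s piX). rewrite Hu1. rewrite_comp (if_s Phi').
      rewrite Hz1. now rewrite_comp HUX0.
    + rewrite_comp <- (if_s piH). now rewrite Hu2.
  - intros T u v Hs Hu.
    apply (pullback_jointly_monic HP1); [|exact Hu].
    rewrite <- HUX1. assoc_r. f_equal.
    apply (pullback_jointly_monic Hdo).
    + rewrite_comp (if_s U). rewrite_comp (if_s U). now rewrite Hs.
    + rewrite_comp HUH1. rewrite_comp HUH1. exact Hu.
Qed.

Section DescentOfDiscreteOpfibrations.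
Context {C : Category} {P X H K : InternalCat C} {piX : IFunctor P X} {piH : IFunctor P H}
  {p : IFunctor X K} {Phi : IFunctor H K}
  (Hlev : is_levelwise_pullback piX piH p Phi) (HdoP : discrete_opfibration piH).

(* Up to isomorphism, [f'] is the comparison map of the square defining
   [discrete_opfibration piH]. *)
Lemma pulled_back_comparison_inverse {Q : C} {qa : Hom Q (ic0 X)} {qb : Hom Q (ic1 K)}
  (HQ : is_pullback qa qb (if0 p) (ic_s K)) (c : Hom (ic1 X) Q)
  (Hc1 : qa ∘ c = ic_s X) (Hc2 : qb ∘ c = if1 p)
  {Z : C} {za : Hom Z (ic1 H)} {zq : Hom Z Q} (HZ : is_pullback za zq (if1 Phi) qb)
  (f' : Hom (ic1 P) Z) (Hf1 : za ∘ f' = if1 piH) (Hf2 : zq ∘ f' = c ∘ if1 piX) :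
  exists g' : Hom Z (ic1 P), f' ∘ g' = idm _ /\ g' ∘ f' = idm _.
Proof.
  destruct Hlev as [HP0 HP1].
  destruct (pullback_lift HP0 (qa ∘ zq) (ic_s H ∘ za)) as [w0 [Hw1 Hw2]].
  { rewrite_comp (proj1 HQ). rewrite_comp <- (proj1 HZ). now rewrite_comp (if_s Phi). }
  destruct (pullback_lift HdoP w0 za Hw2) as [g' [Hg1 Hg2]].
  exists g'. split.
  - apply (pullback_jointly_monic HZ); rewrite comp_id_r.
    + now rewrite_comp Hf1.
    + rewrite_comp Hf2. apply (pullback_jointly_monic HQ).
      * rewrite_comp Hc1. rewrite_comp (if_s piX). rewrite Hg1. exact Hw1.
      * rewrite_comp Hc2. rewrite_comp (proj1 HP1). rewrite Hg2. exact (proj1 HZ).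
  - apply (pullback_jointly_monic HdoP); rewrite comp_id_r.
    + rewrite_comp Hg1. apply (pullback_jointly_monic HP0).
      * rewrite_comp Hw1. rewrite_comp Hf2. rewrite_comp Hc1. exact (if_s piX).
      * rewrite_comp Hw2. rewrite_comp Hf1. exact (if_s piH).
    + now rewrite_comp Hg2.
Qed.

Lemma discrete_opfibration_descends (HC : has_pullbacks C)
  (HPhi1 : effective_descent (if1 Phi)) : discrete_opfibration p.
Proof.
  destruct Hlev as [HP0 HP1].
  destruct (HC _ _ _ (if0 p) (ic_s K)) as [Q [qa [qb HQ]]].
  destruct (pullback_lift HQ (ic_s X) (if1 p) (eq_sym (if_s p))) as [c [Hc1 Hc2]].
  destruct (HC _ _ _ (if1 Phi) qb) as [Z [za [zq HZ]]].
  destruct (pullback_lift HZ (if1 piH) (c ∘ if1 piX)) as [f' [Hf1 Hf2]].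
  { rewrite_comp Hc2. symmetry. exact (proj1 HP1). }
  destruct (pulled_back_comparison_inverse HQ c Hc1 Hc2 HZ f' Hf1 Hf2) as [g' [Hfg Hgf]].
  destruct (pullback_reflects_iso (if1 Phi) HC HPhi1 c Hc2 (is_pullback_sym HP1) HZ
              f' g' Hf1 Hf2 Hfg Hgf) as [h [Hhc Hch]].
  exact (is_pullback_of_iso HQ c h Hc1 Hc2 Hhc Hch).
Qed.

End DescentOfDiscreteOpfibrations.

Theorem lemma5p3 (C : Category) (HC : finitely_complete C)
  (H K : InternalCat C) (Phi : IFunctor H K)
  (HPhi : @effective_descent (CatC C) H K Phi)
  (HPhi1 : effective_descent (if1 Phi))
  (X : InternalCat C) (p : IFunctor X K)
  (Hpb : exists (X' : InternalCat C) (p' : IFunctor X' H) (Phi' : IFunctor X' X),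
      @is_pullback (CatC C) X' X H K Phi' p' p Phi /\ discrete_opfibration p') :
  discrete_opfibration p.
Proof.
  destruct Hpb as [X' [p' [Phi' [[Hcomm Huniv] Hdo]]]].
  destruct (levelwise_pullback_exists (proj2 HC) p Phi) as [P [piX [piH Hlev]]].
  destruct (Huniv P piX piH (levelwise_pullback_commutes Hlev)) as [U [[HUX HUH] _]].
  apply (discrete_opfibration_descends Hlev); [|exact (proj2 HC) | exact HPhi1].
  exact (levelwise_pullback_discrete_opfibration U Hlev Hcomm HUX HUH Hdo).
Qed.
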